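(* For every $n\ge 2$ we have $\mathrm{OT}_n(\mathbb{C})\subseteq\mathrm{ODECO}_n(\mathbb{C})\subseteq\overline{\mathrm{OT}_n(\mathbb{C})}$, and the first inclusion is strict for every $n\ge 2$.
   Context: Associate to $T\in\mathbb{C}^{n\times n\times n}$ the trilinear form $t(x,y,z)=\sum_{i,j,k}T_{ijk}x_iy_jz_k$. $\mathrm{OT}_n(\mathbb{C})$ is the set of tensors whose trilinear form can be written $t(x,y,z)=g(Ax,By,Cz)$ with $A,B,C$ complex orthogonal ($A^TA=\mathrm{Id}$ etc.) and $g=\sum_{i=1}^n\alpha_ix_iy_iz_i$. On $\mathbb{C}^n$ use the bilinear form $\langle x,y\rangle=\sum_ix_iy_i$. $\mathrm{ODECO}_n(\mathbb{C})$ is the set of tensors that can be written $\sum_{j=1}^k u_j\otimes v_j\otimes w_j$ where each of the lists $(u_1,\dots,u_k)$, $(v_1,\dots,v_k)$, $(w_1,\dots,w_k)$ consists of $k$ linearly independent, pairwise orthogonal (w.r.t. $\langle\cdot,\cdot\rangle$) vectors of $\mathbb{C}^n$. Closure is in the Euclidean topology of $\mathbb{C}^{n\times n\times n}$. *)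

From Stdlib Require Import Reals.
Open Scope R_scope.

Record C : Type := mkC { re : R; im : R }.

Definition C0 : C := mkC 0 0.
Definition C1 : C := mkC 1 0.
Definition Cadd (z w : C) : C := mkC (re z + re w) (im z + im w).
Definition Copp (z : C) : C := mkC (- re z) (- im z).
Definition Csub (z w : C) : C := Cadd z (Copp w).
Definition Cmul (z w : C) : C :=
  mkC (re z * re w - im z * im w) (re z * im w + im z * re w).
Definition Cnorm2 (z : C) : R := re z * re z + im z * im z.

Fixpoint Csum (n : nat) (f : nat -> C) : C :=
  match n with
  | O => C0
  | S m => Cadd (Csum m f) (f m)
  end.

Fixpoint Rsum (n : nat) (f : nat -> R) : R :=
  match n with
  | O => 0
  | S m => Rsum m f + f m
  end.

Definition vec := nat -> C.            (* element of C^n : entries x i, i < n *)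
Definition mat := nat -> nat -> C.
Definition tensor := nat -> nat -> nat -> C.

Definition bil (n : nat) (x y : vec) : C := Csum n (fun i => Cmul (x i) (y i)).

Definition mat_vec (n : nat) (A : mat) (x : vec) : vec :=
  fun i => Csum n (fun j => Cmul (A i j) (x j)).

Definition delta (i j : nat) : C := if Nat.eqb i j then C1 else C0.

Definition orthogonal_mat (n : nat) (A : mat) : Prop :=
  forall i j, (i < n)%nat -> (j < n)%nat ->
    Csum n (fun k => Cmul (A k i) (A k j)) = delta i j.

Definition trilin (n : nat) (T : tensor) (x y z : vec) : C :=
  Csum n (fun i => Csum n (fun j => Csum n (fun k =>
    Cmul (Cmul (Cmul (T i j k) (x i)) (y j)) (z k)))).

Definition diag_trilin (n : nat) (alpha : vec) (x y z : vec) : C :=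
  Csum n (fun i => Cmul (Cmul (Cmul (alpha i) (x i)) (y i)) (z i)).

Definition OT (n : nat) (T : tensor) : Prop :=
  exists (A B Cm : mat) (alpha : vec),
    orthogonal_mat n A /\ orthogonal_mat n B /\ orthogonal_mat n Cm /\
    forall x y z : vec,
      trilin n T x y z =
      diag_trilin n alpha (mat_vec n A x) (mat_vec n B y) (mat_vec n Cm z).

Definition lin_indep (n k : nat) (u : nat -> vec) : Prop :=
  forall c : nat -> C,
    (forall a, (a < n)%nat -> Csum k (fun j => Cmul (c j) (u j a)) = C0) ->
    forall j, (j < k)%nat -> c j = C0.

Definition pairwise_orth (n k : nat) (u : nat -> vec) : Prop :=
  forall j j', (j < k)%nat -> (j' < k)%nat -> j <> j' -> bil n (u j) (u j') = C0.

Definition ODECO (n : nat) (T : tensor) : Prop :=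
  exists (k : nat) (u v w : nat -> vec),
    lin_indep n k u /\ lin_indep n k v /\ lin_indep n k w /\
    pairwise_orth n k u /\ pairwise_orth n k v /\ pairwise_orth n k w /\
    forall a b c, (a < n)%nat -> (b < n)%nat -> (c < n)%nat ->
      T a b c = Csum k (fun j => Cmul (Cmul (u j a) (v j b)) (w j c)).

Definition tdist (n : nat) (S T : tensor) : R :=
  sqrt (Rsum n (fun i => Rsum n (fun j => Rsum n (fun k =>
    Cnorm2 (Csub (S i j k) (T i j k)))))).

Definition in_closure (n : nat) (P : tensor -> Prop) (T : tensor) : Prop :=
  forall eps : R, 0 < eps -> exists T', P T' /\ tdist n T T' < eps.

(* All linear algebra is done over the algebraically closed field
   K = R[i], identified with the record-based complex numbers of the statement by phi;
   there a tensor is OT iff T_abc = sum_i al_i A_ia B_ib C_ic for matrices A, B, C with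
   orthonormal rows (OTP).
   - OT ⊆ ODECO: dropping the terms with al_i = 0 leaves three orthogonal families of
     non-isotropic (<x,x> <> 0), hence linearly independent, vectors.
   - ODECO ⊆ closure(OT): orthogonal non-isotropic families normalize and extend to
     orthonormal bases (complex Gram-Schmidt, since the orthogonal complement of an
     orthonormal family contains a non-isotropic vector), so they give OT tensors.
     An arbitrary ODECO family u is perturbed into u + s p, orthogonal and non-isotropic
     for all real s <> 0 (isotropic_correction); letting s -> 0 shows T is a limit.
   - Strictness: for the isotropic e = (1, i, 0, ..., 0), e (x) e (x) e is ODECO, but in
     an OT decomposition each al_j A_j would be a multiple of e, forcing al_j = 0. *)
From Pilot Require Import Defs.
From Stdlib Require Import Reals Lra Lia Classical.
From HB Require Import structures.
From mathcomp Require Import all_boot all_order all_algebra.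
From mathcomp Require Import Rstruct ring.
From mathcomp.real_closed Require Import complex.
Set Implicit Arguments. Unset Strict Implicit. Unset Printing Implicit Defensive.
Import Order.TTheory GRing.Theory Num.Theory.

Section ContinuousFamilies.
Local Open Scope R_scope.

Definition contC (f : R -> Defs.C) : Prop :=
  continuity_pt (fun s => re (f s)) 0 /\ continuity_pt (fun s => im (f s)) 0.

Lemma contC_const (z : Defs.C) : contC (fun _ => z).
Proof. by split; apply: continuity_pt_const. Qed.

Lemma contC_real : contC (fun s => mkC s 0).
Proof.
split; last exact: continuity_pt_const.
exact/derivable_continuous_pt/derivable_pt_id.
Qed.

Lemma contC_add (f g : R -> Defs.C) :
  contC f -> contC g -> contC (fun s => Cadd (f s) (g s)).
Proof. by move=> [f1 f2] [g1 g2]; split; apply: continuity_pt_plus. Qed.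

Lemma contC_mul (f g : R -> Defs.C) :
  contC f -> contC g -> contC (fun s => Cmul (f s) (g s)).
Proof.
move=> [f1 f2] [g1 g2]; split; rewrite /=.
- by apply: continuity_pt_minus; apply: continuity_pt_mult.
- by apply: continuity_pt_plus; apply: continuity_pt_mult.
Qed.

Lemma contC_sum k (f : nat -> R -> Defs.C) :
  (forall j, contC (f j)) -> contC (fun s => Csum k (fun j => f j s)).
Proof.
move=> hf; elim: k => [|k IH] /=; first exact: contC_const.
exact: contC_add.
Qed.

Lemma cont_Rsum k (g : nat -> R -> R) :
  (forall j, continuity_pt (g j) 0) -> continuity_pt (fun s => Rsum k (fun j => g j s)) 0.
Proof.
move=> hg; elim: k => [|k IH] /=; first exact: continuity_pt_const.
exact: continuity_pt_plus.
Qed.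

Lemma Rsum0 k (g : nat -> R) : (forall j, (j < k)%coq_nat -> g j = 0) -> Rsum k g = 0.
Proof.
elim: k => [|k IH] hg //=.
rewrite IH => [|j hj]; last by apply: hg; lia.
by rewrite hg; [lra | lia].
Qed.

Definition sqdist n (S T : tensor) : R :=
  Rsum n (fun a => Rsum n (fun b => Rsum n (fun c => Cnorm2 (Csub (S a b c) (T a b c))))).

Lemma cont_sqdist n (T : tensor) (Ts : R -> tensor) :
  (forall a b c, contC (fun s => Ts s a b c)) -> continuity_pt (fun s => sqdist n T (Ts s)) 0.
Proof.
move=> hTs; apply: cont_Rsum => a; apply: cont_Rsum => b; apply: cont_Rsum => c.
have [h1 h2] : contC (fun s => Csub (T a b c) (Ts s a b c)).
  apply: contC_add; first exact: contC_const.
  by case: (hTs a b c) => ? ?; split; apply: continuity_pt_opp.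
by apply: continuity_pt_plus; apply: continuity_pt_mult.
Qed.

Lemma in_closure_of_family n (P : tensor -> Prop) (T : tensor) (Ts : R -> tensor) :
  (forall a b c, contC (fun s => Ts s a b c)) ->
  (forall a b c, (a < n)%coq_nat -> (b < n)%coq_nat -> (c < n)%coq_nat ->
     Ts 0 a b c = T a b c) ->
  (forall s, s <> 0 -> P (Ts s)) ->
  in_closure n P T.
Proof.
move=> hTs hT0 hP eps eps_gt0.
have sqdist0 : sqdist n T (Ts 0) = 0.
  do 3 (apply: Rsum0 => ? ?); rewrite hT0 //.
  by rewrite /Cnorm2 /= !Rplus_opp_r; lra.
have dist0 : tdist n T (Ts 0) = 0 by rewrite /tdist -/(sqdist n T (Ts 0)) sqdist0 sqrt_0.
have cont_dist : continuity_pt (fun s => tdist n T (Ts s)) 0.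
  apply: (continuity_pt_comp (fun s => sqdist n T (Ts s)) sqrt); first exact: cont_sqdist.
  by rewrite /= sqdist0; apply: continuity_pt_sqrt; lra.
have [alp [alp_gt0 near0]] := cont_dist eps eps_gt0.
exists (Ts (alp / 2)); split; first by apply: hP; lra.
have := near0 (alp / 2); rewrite /= /R_dist dist0 => lt_eps.
apply: Rle_lt_trans (Rle_abs _) _; rewrite -[X in Rabs X]Rminus_0_r; apply: lt_eps.
by split; [split; [exact: I | lra] | rewrite Rminus_0_r Rabs_right; lra].
Qed.

End ContinuousFamilies.

Local Open Scope ring_scope.

(* The symmetric bilinear form <x, y> = x y^T on row vectors over an algebraically
   closed field F; closedness provides the square roots used to normalize vectors. *)
Section SymmetricBilinearForm.
Variable F : numClosedFieldType.

Definition dot n (x y : 'rV[F]_n) : F := (x *m y^T) 0 0.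

Lemma dotC n (x y : 'rV[F]_n) : dot x y = dot y x.
Proof.
by rewrite /dot -[y *m x^T]trmxK trmx_mul trmxK [in RHS]mxE.
Qed.

Lemma dotDl n (x y z : 'rV[F]_n) : dot (x + y) z = dot x z + dot y z.
Proof. by rewrite /dot mulmxDl mxE. Qed.

Lemma dotDr n (x y z : 'rV[F]_n) : dot z (x + y) = dot z x + dot z y.
Proof. by rewrite dotC dotDl !(dotC z). Qed.

Lemma dotZl n a (x y : 'rV[F]_n) : dot (a *: x) y = a * dot x y.
Proof. by rewrite /dot -scalemxAl mxE. Qed.

Lemma dotZr n a (x y : 'rV[F]_n) : dot y (a *: x) = a * dot y x.
Proof. by rewrite dotC dotZl dotC. Qed.

Lemma dot0l n (y : 'rV[F]_n) : dot 0 y = 0.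
Proof. by rewrite /dot mul0mx mxE. Qed.

Lemma dot_suml n k (f : 'I_k -> 'rV[F]_n) y :
  dot (\sum_(j < k) f j) y = \sum_(j < k) dot (f j) y.
Proof. by elim/big_rec2: _ => [|j a b _ <-]; rewrite ?dot0l ?dotDl. Qed.

Lemma dotE n (x y : 'rV[F]_n) : dot x y = \sum_i x 0 i * y 0 i.
Proof. by rewrite /dot mxE; apply: eq_bigr => i _; rewrite mxE. Qed.

Lemma dot_delta n (x : 'rV[F]_n) j : dot x (delta_mx 0 j) = x 0 j.
Proof.
rewrite dotE (bigD1 j) //= big1 ?addr0; first by rewrite mxE !eqxx mulr1.
by move=> i /negPf ij; rewrite mxE ij andbF mulr0.
Qed.

Lemma mulmx_trE m k n (A : 'M[F]_(m, n)) (B : 'M[F]_(k, n)) i j :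
  (A *m B^T) i j = dot (row i A) (row j B).
Proof. by rewrite dotE !mxE; apply: eq_bigr => l _; rewrite !mxE. Qed.

Lemma polarization n (x y : 'rV[F]_n) :
  dot x x = 0 -> dot y y = 0 -> dot (x + y) (x + y) = 0 -> dot x y = 0.
Proof.
move=> xx yy; rewrite !dotDl !dotDr xx yy [dot y x]dotC add0r addr0 -mulr2n.
by move/eqP; rewrite mulrn_eq0 /= => /eqP.
Qed.

Lemma exists_nonisotropic_orthogonal n m (P : 'M[F]_(m, n)) :
  (m < n)%N -> P *m P^T = 1%:M -> exists y : 'rV[F]_n, y *m P^T = 0 /\ dot y y != 0.
Proof.
move=> lt_mn PP.
have : kermx P^T != 0.
  rewrite -mxrank_eq0 mxrank_ker subn_eq0 -ltnNge.
  exact: leq_ltn_trans (rank_leq_col _) lt_mn.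
case/rowV0Pn => w /sub_kermxP wP w_neq0.
apply: NNPP => no_y; move/eqP: w_neq0; apply.
have iso y : y *m P^T = 0 -> dot y y = 0.
  by move=> yP; apply/eqP/negPn/negP => yy; apply: no_y; exists y.
apply/rowP => j; rewrite mxE -dot_delta.
set e : 'rV[F]_n := delta_mx 0 j.
have -> : e = e *m P^T *m P + (e - e *m P^T *m P) by rewrite addrC subrK.
have compl : (e - e *m P^T *m P) *m P^T = 0.
  by rewrite mulmxBl -[_ *m P *m P^T]mulmxA PP mulmx1 subrr.
have w_perp x : dot w (x *m P) = 0 by rewrite /dot trmx_mul mulmxA wP mul0mx mxE.
rewrite dotDr w_perp add0r.
by apply: polarization; rewrite ?iso // mulmxDl wP compl addr0.
Qed.

Definition orthonormal n m (a : nat -> 'rV[F]_n) : Prop :=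
  forall i j, (i < m)%N -> (j < m)%N -> dot (a i) (a j) = (i == j)%:R.

Lemma extend_orthonormal n d : forall m (a : nat -> 'rV[F]_n), (m + d = n)%N ->
  orthonormal m a ->
  exists b : nat -> 'rV[F]_n, (forall i, (i < m)%N -> b i = a i) /\ orthonormal n b.
Proof.
elim: d => [|d IH] m a def_n a_on; first by rewrite addn0 in def_n; subst m; exists a.
pose P := \matrix_(i < m) a i.
have PP : P *m P^T = 1%:M.
  by apply/matrixP => i j; rewrite mulmx_trE !rowK a_on // mxE.
have lt_mn : (m < n)%N by rewrite -def_n addnS ltnS leq_addr.
have [y [yP yy]] := exists_nonisotropic_orthogonal lt_mn PP.
have a_perp_y i : (i < m)%N -> dot (a i) y = 0.
  move=> lt_im; have := congr1 (fun M : 'M[F]_(1, m) => M 0 (Ordinal lt_im)) yP.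
  by rewrite /= mulmx_trE rowK mxE dotC; congr (dot _ _ = _); apply/rowP => k; rewrite !mxE.
pose r := sqrtC (dot y y).
have r_neq0 : r != 0 by rewrite sqrtC_eq0.
pose a' i := if i == m then r^-1 *: y else a i.
have a'_on : orthonormal m.+1 a'.
  move=> i j; rewrite !ltnS /a'.
  case: (eqVneq i m) => [->|im]; case: (eqVneq j m) => [->|jm] /= le_im le_jm.
  - by rewrite dotZl dotZr mulrA -invfM -expr2 /r sqrtCK mulVf.
  - by rewrite dotZl dotC a_perp_y ?mulr0 ?eq_sym ?(negPf jm) // ltn_neqAle jm.
  - by rewrite dotZr a_perp_y ?mulr0 ?(negPf im) // ltn_neqAle im.
  - by rewrite a_on // ltn_neqAle ?im ?jm.
have [|b [b_ext b_on]] := IH m.+1 a' _ a'_on; first by rewrite addSnnS.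
exists b; split => // i lt_im.
by rewrite b_ext /a' ?(ltn_eqF lt_im) // ltnS ltnW.
Qed.

Definition orthogonal_family n k (u : nat -> 'rV[F]_n) : Prop :=
  forall i j, (i < k)%N -> (j < k)%N -> i != j -> dot (u i) (u j) = 0.

Definition nonisotropic n k (u : nat -> 'rV[F]_n) : Prop :=
  forall j, (j < k)%N -> dot (u j) (u j) != 0.

Lemma orthonormal_basis_of_orthogonal n k (u : nat -> 'rV[F]_n) : (k <= n)%N ->
  orthogonal_family k u -> nonisotropic k u ->
  exists (b : nat -> 'rV[F]_n) (lam : nat -> F),
    orthonormal n b /\ forall j, (j < k)%N -> u j = lam j *: b j.
Proof.
move=> le_kn u_orth u_noniso.
pose lam j := sqrtC (dot (u j) (u j)).
have lam_neq0 j : (j < k)%N -> lam j != 0 by move=> lt_jk; rewrite sqrtC_eq0 u_noniso.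
have [||b [b_ext b_on]] := @extend_orthonormal n (n - k) k (fun j => (lam j)^-1 *: u j).
- exact: subnKC.
- move=> i j lt_ik lt_jk; rewrite dotZl dotZr.
  case: (eqVneq i j) => [<-|ij]; last by rewrite u_orth // !mulr0.
  by rewrite mulrA -invfM -expr2 /lam sqrtCK mulVf // u_noniso.
exists b, lam; split => // j lt_jk.
by rewrite b_ext // scalerA mulfV ?scale1r ?lam_neq0.
Qed.

(* The rows of a matrix whose Gram matrix U U^T is diagonal can be perturbed to
   kill the isotropic rows: if U Q = 1 and E is a symmetric idempotent with
   U U^T E = 0, the matrix P = E (Q^T - 1/2 Q^T Q E U) satisfies U P^T = E and
   P P^T = 0. *)
Lemma isotropic_correction k n (U : 'M[F]_(k, n)) (Q : 'M[F]_(n, k)) (E : 'M[F]_k) :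
  U *m Q = 1%:M -> E^T = E -> E *m E = E -> U *m U^T *m E = 0 ->
  exists P : 'M[F]_(k, n), U *m P^T = E /\ P *m P^T = 0.
Proof.
move=> UQ Et EE UUE.
have QU : Q^T *m U^T = 1%:M by rewrite -trmx_mul UQ trmx1.
have UUE' M : M *m U *m U^T *m E = 0 by rewrite -2!mulmxA [U *m _]mulmxA UUE mulmx0.
have [G [Gdef Gt]] : exists G, Q^T *m Q = G /\ G^T = G.
  by exists (Q^T *m Q); rewrite trmx_mul trmxK.
pose X := Q^T - 2^-1 *: (G *m E *m U).
have Xt : X^T = Q - 2^-1 *: (U^T *m E *m G).
  by rewrite linearB linearZ /= !trmx_mul Et Gt trmxK mulmxA.
have UX : U *m X^T = 1%:M.
  by rewrite Xt mulmxBr -scalemxAr !mulmxA UQ UUE !mul0mx scaler0 subr0.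
have XX : X *m X^T = G - 2^-1 *: (E *m G + G *m E).
  rewrite Xt mulmxBl !mulmxBr -!scalemxAl -!scalemxAr !mulmxA QU mul1mx Gdef.
  rewrite -[G *m E *m U *m Q]mulmxA UQ mulmx1 UUE' mul0mx !scaler0 subr0.
  by rewrite scalerDr opprD addrA.
exists (E *m X); split; first by rewrite trmx_mul Et mulmxA UX mul1mx.
rewrite trmx_mul Et mulmxA -[E *m X *m X^T]mulmxA XX mulmxBr mulmxBl.
rewrite -scalemxAr -scalemxAl mulmxDr mulmxDl !mulmxA EE -[E *m G *m E *m E]mulmxA EE.
have half : (2^-1 + 2^-1 : F) = 1 by field.
by rewrite scalerDr -scalerDl half scale1r subrr.
Qed.

Lemma perturb_orthogonal_rows k n (U : 'M[F]_(k, n)) (c : 'rV[F]_k) :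
  row_free U -> U *m U^T = diag_mx c ->
  exists P : 'M[F]_(k, n), forall s, s != 0 ->
    exists d : 'rV[F]_k, (U + s *: P) *m (U + s *: P)^T = diag_mx d /\ forall j, d 0 j != 0.
Proof.
move=> /row_freeP [Q UQ] UU.
pose e := \row_j ((c 0 j == 0)%:R : F).
have diag_mul (x y : 'rV[F]_k) : diag_mx x *m diag_mx y = diag_mx (\row_j (x 0 j * y 0 j)).
  apply/matrixP => i j; rewrite mul_diag_mx !mxE.
  by case: (i == j); rewrite ?mulr1n ?mulr0n ?mulr0.
have [P [UP PP]] : exists P : 'M[F]_(k, n), U *m P^T = diag_mx e /\ P *m P^T = 0.
  apply: (isotropic_correction UQ); first exact: tr_diag_mx.
    rewrite diag_mul; congr diag_mx; apply/rowP => j; rewrite !mxE.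
    by case: (c 0 j == 0); rewrite ?mulr1 ?mulr0.
  rewrite UU diag_mul; apply/matrixP => i j; rewrite !mxE.
  by case: (eqVneq (c 0 i) 0) => [->|_]; rewrite ?mul0r ?mulr0 ?mul0rn.
have PU : P *m U^T = diag_mx e by rewrite -[P]trmxK -trmx_mul UP tr_diag_mx.
exists P => s s_neq0; exists (\row_j (c 0 j + 2 * s * e 0 j)); split.
  rewrite linearD linearZ /= mulmxDl !mulmxDr -!scalemxAl -!scalemxAr UU UP PU PP.
  by apply/matrixP => i j; rewrite !mxE; case: (i == j); rewrite ?mulr1n ?mulr0n; ring.
move=> j; rewrite !mxE; case: (eqVneq (c 0 j) 0) => [->|cj]; last by rewrite mulr0 addr0.
by rewrite add0r mulr1 mulf_neq0 ?pnatr_eq0.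
Qed.
End SymmetricBilinearForm.

Lemma sum_trilinear (R : comRingType) n k (f g h : nat -> nat -> R) (x y z : nat -> R) :
  \sum_(a < n) \sum_(b < n) \sum_(c < n)
     (\sum_(j < k) f j a * g j b * h j c) * x a * y b * z c =
  \sum_(j < k) (\sum_(a < n) f j a * x a) * (\sum_(b < n) g j b * y b) *
     (\sum_(c < n) h j c * z c).
Proof.
under eq_bigr => a _ do under eq_bigr => b _ do under eq_bigr => c _ do
  rewrite !mulr_suml.
under eq_bigr => a _ do under eq_bigr => b _ do rewrite exchange_big /=.
under eq_bigr => a _ do rewrite exchange_big /=.
rewrite exchange_big /=; apply: eq_bigr => j _.
rewrite !big_distrl /=; apply: eq_bigr => a _.
rewrite (big_distrr (f j a * x a)) /= big_distrl /=; apply: eq_bigr => b _.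
by rewrite big_distrr /=; apply: eq_bigr => c _; ring.
Qed.

Lemma sum_bilinear (R : comRingType) n m (f : nat -> R) (g h : nat -> nat -> R) (p q : nat -> R) :
  \sum_(b < n) \sum_(c < n) (\sum_(i < m) f i * g i b * h i c) * p b * q c =
  \sum_(i < m) f i * (\sum_(b < n) g i b * p b) * (\sum_(c < n) h i c * q c).
Proof.
under eq_bigr => b _ do under eq_bigr => c _ do rewrite !mulr_suml.
under eq_bigr => b _ do rewrite exchange_big /=.
rewrite exchange_big /=; apply: eq_bigr => i _.
rewrite (big_distrr (f i)) big_distrl /=; apply: eq_bigr => b _.
by rewrite big_distrr /=; apply: eq_bigr => c _; ring.
Qed.

Lemma sum_delta (R : pzSemiRingType) n (f : nat -> R) a : (a < n)%N ->
  \sum_(i < n) f i * (i == a :> nat)%:R = f a.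
Proof.
move=> lt_an; rewrite (bigD1 (Ordinal lt_an)) //= eqxx mulr1 big1 ?addr0 // => i.
by rewrite -val_eqE /= => /negPf ->; rewrite mulr0.
Qed.

Lemma sum_support (R : nmodType) n (P : pred nat) (G : nat -> R) :
  (forall i, ~~ P i -> G i = 0) ->
  \sum_(j < size [seq i <- iota 0 n | P i]) G (nth 0%N [seq i <- iota 0 n | P i] j) =
  \sum_(i < n) G i.
Proof.
move=> G0; set l := [seq i <- iota 0 n | P i]; rewrite -(big_mkord xpredT G) (bigID P) /=.
rewrite [X in _ + X]big1 => [|i /G0 //]; rewrite addr0.
by rewrite -[RHS]big_filter /index_iota subn0 -/l [RHS](big_nth 0%N) big_mkord.
Qed.

Definition K := (Rdefinitions.R)[i].
Definition phi (z : Defs.C) : K := (re z +i* im z)%C.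
Definition psi (x : K) : Defs.C := mkC (complex.Re x) (complex.Im x).

Lemma phiK x : phi (psi x) = x. Proof. by case: x. Qed.
Lemma psiK z : psi (phi z) = z. Proof. by case: z. Qed.
Lemma phi_inj : injective phi. Proof. exact: can_inj psiK. Qed.
Lemma phiD z w : phi (Cadd z w) = phi z + phi w. Proof. by []. Qed.
Lemma phiM z w : phi (Cmul z w) = phi z * phi w. Proof. by []. Qed.
Lemma phi0 : phi Defs.C0 = 0. Proof. by []. Qed.
Lemma phi1 : phi Defs.C1 = 1. Proof. by []. Qed.

Lemma phi_sum n f : phi (Csum n f) = \sum_(i < n) phi (f i).
Proof. by elim: n => [|n IH] /=; rewrite ?big_ord0 // phiD IH big_ord_recr. Qed.

Lemma phi_delta i j : phi (delta i j) = (i == j)%:R.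
Proof. by rewrite /delta; case: (Nat.eqb_spec i j) => [->|/eqP/negPf ->]; rewrite ?eqxx. Qed.

Lemma phi_real_neq0 (s : R) : s <> 0%R -> phi (mkC s 0) != 0.
Proof. by move=> s_neq0; apply/eqP => /(congr1 psi); rewrite psiK => -[]. Qed.

Definition rv n (x : vec) : 'rV[K]_n := \row_(i < n) phi (x i).
Definition rvs n (u : nat -> vec) : nat -> 'rV[K]_n := fun j => rv n (u j).

(* A k x n matrix over K as a family of k vectors of C^n (zero outside the bounds). *)
Definition ofm k n (M : 'M[K]_(k, n)) : nat -> vec := fun j a =>
  if insub j is Some j' then if insub a is Some a' then psi (M j' a') else Defs.C0
  else Defs.C0.

Lemma phi_ofm k n (M : 'M[K]_(k, n)) (j : 'I_k) (a : 'I_n) : phi (ofm M j a) = M j a.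
Proof. by rewrite /ofm !valK phiK. Qed.

Lemma rvs_ofm k n (M : 'M[K]_(k, n)) (j : 'I_k) : rvs n (ofm M) j = row j M.
Proof. by apply/rowP => a; rewrite !mxE phi_ofm. Qed.

Lemma phi_bil n x y : phi (bil n x y) = dot (rv n x) (rv n y).
Proof. by rewrite phi_sum dotE; apply: eq_bigr => i _; rewrite !mxE phiM. Qed.

Definition mm n (A : mat) : 'M[K]_n := \matrix_(i < n, j < n) phi (A i j).

Lemma row_mm n (A : mat) (i : 'I_n) : row i (mm n A) = rv n (A i).
Proof. by apply/rowP => j; rewrite !mxE. Qed.

Lemma orthogonal_mat_mx n (A : mat) : orthogonal_mat n A <-> (mm n A)^T *m mm n A = 1%:M.
Proof.
split => [orthA | AA].
  apply/matrixP => i j; rewrite !mxE -phi_delta.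
  rewrite -(orthA i j (elimT ssrnat.ltP (ltn_ord i)) (elimT ssrnat.ltP (ltn_ord j))).
  by rewrite phi_sum; apply: eq_bigr => l _; rewrite !mxE phiM.
move=> i j /ssrnat.ltP lt_in /ssrnat.ltP lt_jn; apply: phi_inj; rewrite phi_delta phi_sum.
have := congr1 (fun M : 'M[K]_n => M (Ordinal lt_in) (Ordinal lt_jn)) AA.
by rewrite /= !mxE => <-; apply: eq_bigr => l _; rewrite !mxE phiM.
Qed.

Lemma orthonormal_rows_mx n (A : mat) :
  orthonormal n (rvs n A) <-> mm n A *m (mm n A)^T = 1%:M.
Proof.
split => [A_on | AA].
  by apply/matrixP => i j; rewrite mulmx_trE !row_mm A_on // mxE.
move=> i j lt_in lt_jn.
have := congr1 (fun M : 'M[K]_n => M (Ordinal lt_in) (Ordinal lt_jn)) AA.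
by rewrite /= mulmx_trE !row_mm mxE.
Qed.

Lemma orthogonal_matE n (A : mat) : orthogonal_mat n A <-> orthonormal n (rvs n A).
Proof.
rewrite orthogonal_mat_mx orthonormal_rows_mx.
by split => /mulmx1C.
Qed.

Lemma phi_trilin n T x y z : phi (trilin n T x y z) =
  \sum_(a < n) \sum_(b < n) \sum_(c < n) phi (T a b c) * phi (x a) * phi (y b) * phi (z c).
Proof.
rewrite phi_sum; apply: eq_bigr => a _; rewrite phi_sum; apply: eq_bigr => b _.
by rewrite phi_sum; apply: eq_bigr => c _; rewrite !phiM.
Qed.

Lemma phi_diag_trilin n al x y z : phi (diag_trilin n al x y z) =
  \sum_(i < n) phi (al i) * phi (x i) * phi (y i) * phi (z i).
Proof. by rewrite phi_sum; apply: eq_bigr => i _; rewrite !phiM. Qed.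

Lemma phi_mat_vec n A x i : phi (mat_vec n A x i) = \sum_(j < n) phi (A i j) * phi (x j).
Proof. by rewrite phi_sum; apply: eq_bigr => j _; rewrite phiM. Qed.

Definition diag_coords n (T : tensor) (A B Cm : mat) (al : vec) : Prop :=
  forall a b c, (a < n)%N -> (b < n)%N -> (c < n)%N ->
    phi (T a b c) = \sum_(i < n) phi (al i) * phi (A i a) * phi (B i b) * phi (Cm i c).

(* OT tensors are those with such coordinates: evaluate the defining identity on unit
   vectors, and conversely regroup the sums of the trilinear form. *)
Lemma OTP n T : OT n T <-> exists (A B Cm : mat) (al : vec),
  [/\ orthonormal n (rvs n A), orthonormal n (rvs n B), orthonormal n (rvs n Cm)
    & diag_coords n T A B Cm al].
Proof.
split => [[A [B [Cm [al [/orthogonal_matE oA [/orthogonal_matE oB [/orthogonal_matE oC H]]]]]]]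
         | [A [B [Cm [al [oA oB oC H]]]]]].
  exists A, B, Cm, al; split => // a b c lt_an lt_bn lt_cn.
  have := congr1 phi (H (delta^~ a) (delta^~ b) (delta^~ c)).
  rewrite phi_trilin phi_diag_trilin.
  under eq_bigr => i _ do under eq_bigr => j _ do under eq_bigr => k _ do rewrite !phi_delta.
  under eq_bigr => i _ do under eq_bigr => j _ do
    rewrite (sum_delta (fun k => phi (T i j k) * _ * _)) //.
  under eq_bigr => i _ do rewrite (sum_delta (fun j => phi (T i j c) * _)) //.
  rewrite (sum_delta (fun i => phi (T i b c))) // => ->.
  apply: eq_bigr => i _; rewrite !phi_mat_vec.
  under eq_bigr do rewrite phi_delta.
  under [X in _ * _ * X * _]eq_bigr do rewrite phi_delta.
  under [X in _ * _ * X]eq_bigr do rewrite phi_delta.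
  by rewrite (sum_delta (phi \o A i)) // (sum_delta (phi \o B i)) // (sum_delta (phi \o Cm i)).
exists A, B, Cm, al; do 3 (split; first exact/orthogonal_matE).
move=> x y z; apply: phi_inj; rewrite phi_trilin phi_diag_trilin.
under eq_bigr => a _ do under eq_bigr => b _ do under eq_bigr => c _ do rewrite H //.
have := sum_trilinear n n (fun i a => phi (al i) * phi (A i a)) (fun i b => phi (B i b))
  (fun i c => phi (Cm i c)) (phi \o x) (phi \o y) (phi \o z).
cbv beta => ->; apply: eq_bigr => i _.
by rewrite !phi_mat_vec; under eq_bigr do rewrite -mulrA; rewrite -big_distrr.
Qed.

Definition orth_noniso n k (u : nat -> vec) : Prop :=
  orthogonal_family k (rvs n u) /\ nonisotropic k (rvs n u).

Definition rank1_coords n k (T : tensor) (u v w : nat -> vec) : Prop :=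
  forall a b c, (a < n)%N -> (b < n)%N -> (c < n)%N ->
    phi (T a b c) = \sum_(j < k) phi (u j a) * phi (v j b) * phi (w j c).

Lemma pairwise_orthE n k (u : nat -> vec) :
  pairwise_orth n k u <-> orthogonal_family k (rvs n u).
Proof.
split => u_orth i j.
  by move=> lt_ik lt_jk /eqP ij; rewrite -phi_bil u_orth ?phi0 //; apply/ssrnat.ltP.
move=> /ssrnat.ltP lt_ik /ssrnat.ltP lt_jk ij.
by apply: phi_inj; rewrite phi_bil phi0 u_orth //; apply/eqP.
Qed.

Lemma lin_indep_of_orth_noniso n k (u : nat -> vec) : orth_noniso n k u -> lin_indep n k u.
Proof.
move=> [u_orth u_noniso] c c_rel j0 /ssrnat.ltP lt_j0k.
have comb0 : \sum_(j < k) phi (c j) *: rvs n u j = 0.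
  apply/rowP => a; rewrite !mxE -phi0 -(c_rel a (elimT ssrnat.ltP (ltn_ord a))).
  by rewrite phi_sum summxE; apply: eq_bigr => j _; rewrite !mxE phiM.
have := congr1 (fun v => dot v (rvs n u j0)) comb0.
rewrite /= dot0l dot_suml (bigD1 (Ordinal lt_j0k)) //= big1 ?addr0 => [|j].
  rewrite dotZl => /eqP; rewrite mulf_eq0 (negPf (u_noniso _ lt_j0k)) orbF -phi0.
  by move=> /eqP/phi_inj.
by rewrite -val_eqE /= => j_neq; rewrite dotZl u_orth ?mulr0.
Qed.

Lemma ODECO_of_orth_noniso n k (T : tensor) (u v w : nat -> vec) :
  orth_noniso n k u -> orth_noniso n k v -> orth_noniso n k w ->
  rank1_coords n k T u v w -> ODECO n T.
Proof.
move=> hu hv hw HT; exists k, u, v, w.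
do 3 (split; first exact: lin_indep_of_orth_noniso).
case: hu hv hw => [u_orth _] [v_orth _] [w_orth _].
do 3 (split; first by apply/pairwise_orthE).
move=> a b c /ssrnat.ltP lt_an /ssrnat.ltP lt_bn /ssrnat.ltP lt_cn.
by apply: phi_inj; rewrite HT // phi_sum; apply: eq_bigr => j _; rewrite !phiM.
Qed.

Lemma orth_noniso_sub n k (M : mat) (s : nat -> nat) :
  orthonormal n (rvs n M) -> (forall j, (j < k)%N -> (s j < n)%N) ->
  {in gtn k &, injective s} -> orth_noniso n k (M \o s).
Proof.
move=> M_on s_lt s_inj; split => [i j lt_ik lt_jk ij | j lt_jk]; rewrite /rvs /= M_on ?s_lt //.
  by case: eqP => // /s_inj ij'; rewrite ij' ?eqxx in ij.
by rewrite eqxx oner_neq0.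
Qed.

Lemma orth_noniso_scale n k (u : nat -> vec) (lam : nat -> Defs.C) :
  orth_noniso n k u -> (forall j, (j < k)%N -> phi (lam j) != 0) ->
  orth_noniso n k (fun j a => Cmul (lam j) (u j a)).
Proof.
move=> [u_orth u_noniso] lam_neq0.
have rvsZ j : rvs n (fun j a => Cmul (lam j) (u j a)) j = phi (lam j) *: rvs n u j.
  by apply/rowP => a; rewrite !mxE phiM.
split => [i j lt_ik lt_jk ij | j lt_jk]; rewrite !rvsZ dotZl dotZr.
  by rewrite u_orth ?mulr0.
by rewrite !mulf_neq0 ?lam_neq0 ?u_noniso.
Qed.

(* First inclusion: discarding the zero diagonal coefficients of an OT tensor leaves an
   orthogonal decomposition by non-isotropic vectors. *)
Lemma OT_ODECO n T : OT n T -> ODECO n T.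
Proof.
case/OTP => A [B [Cm [al [oA oB oC HT]]]].
pose supp i := phi (al i) != 0.
pose l := [seq i <- iota 0 n | supp i].
pose s j := nth 0%N l j.
have s_spec j : (j < size l)%N -> (s j < n)%N /\ supp (s j).
  by move=> lt_jl; have := mem_nth 0%N lt_jl; rewrite mem_filter mem_iota => /andP[-> /andP[]].
have s_lt j lt_jl := (s_spec j lt_jl).1.
have s_inj : {in gtn (size l) &, injective s}.
  move=> i j lt_il lt_jl /eqP; rewrite nth_uniq // => [/eqP //|].
  by rewrite filter_uniq // iota_uniq.
apply: (@ODECO_of_orth_noniso n (size l) T (fun j a => Cmul (al (s j)) (A (s j) a))
  (B \o s) (Cm \o s)).
- by apply: orth_noniso_scale => [|j /s_spec[]]; first exact: orth_noniso_sub.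
- exact: orth_noniso_sub.
- exact: orth_noniso_sub.
move=> a b c lt_an lt_bn lt_cn; rewrite HT //.
rewrite -(@sum_support _ n supp (fun i => phi (al i) * phi (A i a) * phi (B i b) * phi (Cm i c))).
  by apply: eq_bigr => j _; rewrite phiM.
by move=> i /negPn/eqP ->; rewrite !mul0r.
Qed.

(* Three orthogonal families of k <= n non-isotropic vectors give an OT tensor: normalize
   them and complete each to an orthonormal basis, i.e. to the rows of an orthogonal matrix. *)
Lemma OT_of_orth_noniso n k (T : tensor) (u v w : nat -> vec) : (k <= n)%N ->
  orth_noniso n k u -> orth_noniso n k v -> orth_noniso n k w ->
  rank1_coords n k T u v w -> OT n T.
Proof.
move=> le_kn [u_orth u_ni] [v_orth v_ni] [w_orth w_ni] HT.
have [bu [lu [bu_on u_def]]] := orthonormal_basis_of_orthogonal le_kn u_orth u_ni.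
have [bv [lv [bv_on v_def]]] := orthonormal_basis_of_orthogonal le_kn v_orth v_ni.
have [bw [lw [bw_on w_def]]] := orthonormal_basis_of_orthogonal le_kn w_orth w_ni.
pose mk (b : nat -> 'rV[K]_n) : mat := ofm (\matrix_(i < n) b i).
have mk_on b : orthonormal n b -> orthonormal n (rvs n (mk b)).
  move=> b_on i j lt_in lt_jn.
  have -> : i = Ordinal lt_in by []. have -> : j = Ordinal lt_jn by [].
  by rewrite !rvs_ofm !rowK b_on.
have coord (x : nat -> vec) j (a : 'I_n) : phi (x j a) = rvs n x j 0 a by rewrite mxE.
apply/OTP; exists (mk bu), (mk bv), (mk bw).
exists (fun i => if (i < k)%N then psi (lu i * lv i * lw i) else Defs.C0).
split; try exact: mk_on.
move=> a b c lt_an lt_bn lt_cn; rewrite HT //.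
rewrite (big_ord_widen n (fun j => phi (u j a) * phi (v j b) * phi (w j c)) le_kn) big_mkcond /=.
apply: eq_bigr => i _; case: ifP => lt_ik; last by rewrite phi0 !mul0r.
have -> : a = Ordinal lt_an by []. have -> : b = Ordinal lt_bn by [].
have -> : c = Ordinal lt_cn by [].
rewrite phiK !phi_ofm !mxE !coord u_def ?v_def ?w_def // !mxE.
by ring.
Qed.

Definition mxs n k (u : nat -> vec) : 'M[K]_(k, n) := \matrix_(j < k, a < n) phi (u j a).

Lemma row_mxs n k (u : nat -> vec) (j : 'I_k) : row j (mxs n k u) = rvs n u j.
Proof. by apply/rowP => a; rewrite !mxE. Qed.

Lemma row_free_of_lin_indep n k (u : nat -> vec) : lin_indep n k u -> row_free (mxs n k u).
Proof.
move=> u_indep; apply: inj_row_free => c cU0; apply/rowP => j.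
rewrite !mxE -(phi_ofm c ord0 j) (u_indep (ofm c 0)) ?phi0 //; last exact/ssrnat.ltP.
move=> a /ssrnat.ltP lt_an; apply: phi_inj; rewrite phi_sum phi0.
have := congr1 (fun x : 'rV[K]_n => x 0 (Ordinal lt_an)) cU0; rewrite /= !mxE => cU0a.
rewrite -[RHS]cU0a.
by apply: eq_bigr => i _; rewrite phiM (phi_ofm c ord0) mxE.
Qed.

Lemma gram_of_pairwise_orth n k (u : nat -> vec) : pairwise_orth n k u ->
  mxs n k u *m (mxs n k u)^T = diag_mx (\row_j dot (rvs n u j) (rvs n u j)).
Proof.
move/pairwise_orthE => u_orth; apply/matrixP => i j; rewrite mulmx_trE !row_mxs !mxE.
by case: (eqVneq i j) => [->|ij]; rewrite ?mulr1n // u_orth.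
Qed.

Lemma orth_noniso_of_gram n k (u : nat -> vec) (d : 'rV[K]_k) :
  mxs n k u *m (mxs n k u)^T = diag_mx d -> (forall j, d 0 j != 0) -> orth_noniso n k u.
Proof.
move=> gram d_neq0; have entry i j (lt_ik : (i < k)%N) (lt_jk : (j < k)%N) :
    dot (rvs n u i) (rvs n u j) = diag_mx d (Ordinal lt_ik) (Ordinal lt_jk).
  by rewrite -gram mulmx_trE !row_mxs.
split => [i j lt_ik lt_jk ij | j lt_jk].
  by rewrite (entry _ _ lt_ik lt_jk) mxE eqE /= (negPf ij) mulr0n.
by rewrite (entry _ _ lt_jk lt_jk) mxE eqxx mulr1n.
Qed.

Definition perturb (u p : nat -> vec) (s : R) : nat -> vec :=
  fun j a => Cadd (u j a) (Cmul (mkC s 0) (p j a)).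

Lemma phi_perturb0 (u p : nat -> vec) j a : phi (perturb u p 0 j a) = phi (u j a).
Proof. by rewrite phiD phiM mul0r addr0. Qed.

Lemma contC_perturb (u p : nat -> vec) j a : contC (fun s => perturb u p s j a).
Proof.
apply: contC_add; first exact: contC_const.
by apply: contC_mul; [exact: contC_real | exact: contC_const].
Qed.

Lemma perturb_to_orth_noniso n k (u : nat -> vec) : lin_indep n k u -> pairwise_orth n k u ->
  exists p : nat -> vec, forall s : R, s <> 0%R -> orth_noniso n k (perturb u p s).
Proof.
move=> u_indep u_orth.
have [P hP] := perturb_orthogonal_rows (row_free_of_lin_indep u_indep)
  (gram_of_pairwise_orth u_orth).
exists (ofm P) => s s_neq0.
have [d [gram d_neq0]] := hP _ (phi_real_neq0 s_neq0).
apply: (orth_noniso_of_gram (d := d)) => //; rewrite -gram.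
by congr (_ *m _); [|congr trmx]; apply/matrixP => j a; rewrite !mxE phiD phiM phi_ofm.
Qed.

(* Second inclusion: the perturbed decompositions are OT tensors converging to T. *)
Lemma ODECO_closure n T : ODECO n T -> in_closure n (OT n) T.
Proof.
move=> [k [u [v [w [u_indep [v_indep [w_indep [u_orth [v_orth [w_orth HT]]]]]]]]]].
have le_kn : (k <= n)%N.
  by rewrite -(eqP (row_free_of_lin_indep u_indep)) rank_leq_col.
have [pu hu] := perturb_to_orth_noniso u_indep u_orth.
have [pv hv] := perturb_to_orth_noniso v_indep v_orth.
have [pw hw] := perturb_to_orth_noniso w_indep w_orth.
pose Ts s : tensor := fun a b c => Csum k (fun j =>
  Cmul (Cmul (perturb u pu s j a) (perturb v pv s j b)) (perturb w pw s j c)).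
apply: (@in_closure_of_family n (OT n) T Ts).
- move=> a b c; apply: contC_sum => j.
  by do 2 (apply: contC_mul; last exact: contC_perturb); exact: contC_perturb.
- move=> a b c lt_an lt_bn lt_cn; rewrite HT //; apply: phi_inj; rewrite !phi_sum.
  by apply: eq_bigr => j _; rewrite !phiM !phi_perturb0.
move=> s s_neq0; apply: (OT_of_orth_noniso le_kn (hu s s_neq0) (hv s s_neq0) (hw s s_neq0)).
by move=> a b c _ _ _; rewrite phi_sum; apply: eq_bigr => j _; rewrite !phiM.
Qed.


Lemma contract_diag_coords n T A B Cm al :
  orthonormal n (rvs n B) -> orthonormal n (rvs n Cm) -> diag_coords n T A B Cm al ->
  forall j a, (j < n)%N -> (a < n)%N ->
  \sum_(b < n) \sum_(c < n) phi (T a b c) * phi (B j b) * phi (Cm j c) = phi (al j) * phi (A j a).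
Proof.
move=> oB oC HT j a lt_jn lt_an.
under eq_bigr => b _ do under eq_bigr => c _ do rewrite HT //.
have := sum_bilinear n n (fun i => phi (al i) * phi (A i a)) (fun i b => phi (B i b))
  (fun i c => phi (Cm i c)) (phi \o B j) (phi \o Cm j).
cbv beta => ->.
have row_dot (M : mat) i : \sum_(b < n) phi (M i b) * phi (M j b) = dot (rvs n M i) (rvs n M j).
  by rewrite dotE; apply: eq_bigr => b _; rewrite !mxE.
under eq_bigr => i _ do rewrite !row_dot oB // oC // -mulrA -natrM mulnb andbb.
exact: (sum_delta (fun i => phi (al i) * phi (A i a))).
Qed.

Definition iso_vec : vec :=
  fun a => if a == 0%N then Defs.C1 else if a == 1%N then mkC 0 1 else Defs.C0.

Lemma iso_vec_isotropic n : (2 <= n)%N -> dot (rv n iso_vec) (rv n iso_vec) = 0.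
Proof.
case: n => [|[|n]] // _; rewrite dotE !big_ord_recl big1 => [|i _]; rewrite !mxE; last first.
  have -> : iso_vec (lift ord0 (lift ord0 i)) = Defs.C0 by [].
  by rewrite phi0 mulr0.
have -> : iso_vec ord0 = Defs.C1 by [].
have -> : iso_vec (lift ord0 ord0) = mkC 0 1 by [].
have -> : phi (mkC 0 1) = 'i%C by [].
by rewrite phi1 mulr1 -expr2 sqr_i addr0 subrr.
Qed.

Definition iso_cube : tensor := fun a b c => Cmul (Cmul (iso_vec a) (iso_vec b)) (iso_vec c).

Lemma ODECO_iso_cube n : (2 <= n)%N -> ODECO n iso_cube.
Proof.
move=> le2n; have lt0n : (0 < n)%N by apply: leq_trans le2n.
have indep : lin_indep n 1 (fun _ => iso_vec).
  move=> c c_rel j /ssrnat.ltP; rewrite ltnS leqn0 => /eqP ->.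
  have := congr1 phi (c_rel 0%N (elimT ssrnat.ltP lt0n)).
  by rewrite phi_sum big_ord1 phiM phi1 mulr1 => /phi_inj.
have orth : pairwise_orth n 1 (fun _ => iso_vec).
  by move=> j j' /ssrnat.ltP + /ssrnat.ltP; rewrite !ltnS !leqn0 => /eqP -> /eqP ->.
exists 1%N, (fun _ => iso_vec), (fun _ => iso_vec), (fun _ => iso_vec).
do 6 (split => //).
by move=> a b c _ _ _; apply: phi_inj; rewrite phi_sum big_ord1.
Qed.

(* Strictness: in an OT decomposition of e (x) e (x) e, each al_j A_j would be a multiple
   of the isotropic vector e, forcing al_j = 0, although the tensor is nonzero. *)
Lemma not_OT_iso_cube n : (2 <= n)%N -> ~ OT n iso_cube.
Proof.
move=> le2n /OTP [A [B [Cm [al [oA oB oC HT]]]]].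
have lt0n : (0 < n)%N by apply: leq_trans le2n.
have al0 j : (j < n)%N -> phi (al j) = 0.
  move=> lt_jn; set e := rv n iso_vec.
  pose be := dot e (rvs n B j) * dot e (rvs n Cm j).
  have al_A : phi (al j) *: rvs n A j = be *: e.
    apply/rowP => a; rewrite !mxE -(contract_diag_coords oB oC HT lt_jn (ltn_ord a)).
    rewrite /be !dotE mulrAC !big_distrl /=; apply: eq_bigr => b _.
    by rewrite big_distrr /=; apply: eq_bigr => c _; rewrite !mxE /iso_cube !phiM; ring.
  have := congr1 (fun x => dot x x) al_A.
  rewrite /= !dotZl !dotZr iso_vec_isotropic // oA // eqxx !mulr0 mulr1 => /eqP.
  by rewrite mulf_eq0 orbb => /eqP.
have := HT 0%N 0%N 0%N lt0n lt0n lt0n.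
rewrite big1 => [|i _]; last by rewrite al0 // !mul0r.
by rewrite /iso_cube !phiM /iso_vec /= phi1 !mulr1 => /eqP; rewrite oner_eq0.
Qed.

Theorem theorem47 : forall n : nat, (2 <= n)%coq_nat ->
  (forall T : tensor, OT n T -> ODECO n T) /\
  (forall T : tensor, ODECO n T -> in_closure n (OT n) T) /\
  (exists T : tensor, ODECO n T /\ ~ OT n T).
Proof.
move=> n /ssrnat.leP le2n; split; first exact: OT_ODECO.
split; first exact: ODECO_closure.
by exists iso_cube; split; [exact: ODECO_iso_cube | exact: not_OT_iso_cube].
Qed.
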